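(* Let $(X,d)$ be a complete metric space with $|X|\geqslant 3$ and let $T\colon X\to X$ be continuous and asymptotically regular, and suppose there exist $\alpha\in[0,\frac12)$ and $\lambda\in[0,\infty)$ such that $$d(Tx,Ty)+d(Ty,Tz)+d(Tx,Tz)\leqslant \alpha\big(d(x,y)+d(y,z)+d(z,x)\big)+\lambda\big(d(x,Tx)+d(y,Ty)+d(z,Tz)\big)$$ for all pairwise distinct $x,y,z\in X$. Then $T$ has a fixed point, and $T$ has at most two fixed points.
   Context: A mapping $T\colon X\to X$ on a metric space is asymptotically regular if $\lim_{n\to\infty}d(T^{n+1}x,T^nx)=0$ for every $x\in X$. *)

From Stdlib Require Import Reals.
Open Scope R_scope.

Definition is_metric {X : Type} (d : X -> X -> R) : Prop :=
  (forall x y, 0 <= d x y) /\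
  (forall x y, d x y = 0 <-> x = y) /\
  (forall x y, d x y = d y x) /\
  (forall x y z, d x z <= d x y + d y z).

Definition mconverges {X : Type} (d : X -> X -> R) (u : nat -> X) (l : X) : Prop :=
  forall eps, eps > 0 -> exists N : nat, forall n, (n >= N)%nat -> d (u n) l < eps.

Definition mcauchy {X : Type} (d : X -> X -> R) (u : nat -> X) : Prop :=
  forall eps, eps > 0 -> exists N : nat, forall m n, (m >= N)%nat -> (n >= N)%nat ->
    d (u m) (u n) < eps.

Definition mcomplete {X : Type} (d : X -> X -> R) : Prop :=
  forall u : nat -> X, mcauchy d u -> exists l, mconverges d u l.

Definition mcontinuous {X : Type} (d : X -> X -> R) (T : X -> X) : Prop :=
  forall x eps, eps > 0 -> exists delta, delta > 0 /\
    forall y, d x y < delta -> d (T x) (T y) < eps.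

Definition asymptotically_regular {X : Type} (d : X -> X -> R) (T : X -> X) : Prop :=
  forall x, Un_cv (fun n => d (Nat.iter (S n) T x) (Nat.iter n T x)) 0.

(* Applied to x, y, T x with T x <> x, the three-point condition and two
   triangle inequalities through T y bound d(x, y) by a multiple of the
   displacements d(x, T x), d(y, T y), d(T x, T (T x)).  Along an orbit that
   never reaches a fixed point these displacements tend to 0 by asymptotic
   regularity, so the orbit is Cauchy, and continuity makes its limit a fixed
   point.  Three distinct fixed points would have a perimeter p > 0 with
   p <= alpha p. *)

From Stdlib Require Import Reals Lra Classical.
Open Scope R_scope.

Section MetricFacts.

Context {X : Type} {d : X -> X -> R} (Hmet : is_metric d).

Lemma dist_nonneg x y : 0 <= d x y.
Proof. apply Hmet. Qed.

Lemma dist_self x : d x x = 0.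
Proof. apply Hmet; reflexivity. Qed.

Lemma dist_sym x y : d x y = d y x.
Proof. apply Hmet. Qed.

Lemma dist_triangle x y z : d x z <= d x y + d y z.
Proof. apply Hmet. Qed.

Lemma dist_pos {x y : X} : x <> y -> 0 < d x y.
Proof.
  intros Hxy. destruct (dist_nonneg x y) as [|E]; [assumption|].
  exfalso. apply Hxy, (proj1 (proj2 Hmet)). now symmetry.
Qed.

Lemma eq_of_dist_lt x y : (forall eps, eps > 0 -> d x y < eps) -> x = y.
Proof.
  intros Hsmall. apply (proj1 (proj2 Hmet)).
  destruct (dist_nonneg x y) as [Hpos|]; [|now symmetry].
  specialize (Hsmall (d x y) Hpos). lra.
Qed.

Lemma mcauchy_of_dist_le_sum (u : nat -> X) (g : nat -> R) :
  Un_cv g 0 -> (forall m n, d (u m) (u n) <= g m + g n) -> mcauchy d u.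
Proof.
  intros Hg Hbound eps Heps.
  destruct (Hg (eps / 2)) as [N HN]; [lra|].
  exists N. intros m n Hm Hn.
  specialize (HN m Hm) as Hgm. specialize (HN n Hn) as Hgn.
  unfold R_dist in Hgm, Hgn. rewrite Rminus_0_r in Hgm, Hgn.
  pose proof (Hbound m n). pose proof (Rle_abs (g m)). pose proof (Rle_abs (g n)).
  lra.
Qed.

Lemma orbit_limit_fixed (T : X -> X) (u : nat -> X) (l : X) :
  mcontinuous d T -> (forall n, u (S n) = T (u n)) -> mconverges d u l ->
  T l = l.
Proof.
  intros Hcont Horbit Hl. apply eq_of_dist_lt. intros eps Heps.
  destruct (Hcont l (eps / 2)) as [delta [Hdelta HT]]; [lra|].
  destruct (Hl (Rmin delta (eps / 2))) as [N HN]; [now apply Rmin_pos; lra|].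
  pose proof (HN N (le_n N)) as HuN. pose proof (HN (S N) (le_S _ _ (le_n N))) as HuSN.
  pose proof (Rmin_l delta (eps / 2)). pose proof (Rmin_r delta (eps / 2)).
  assert (HTuN : d (T l) (T (u N)) < eps / 2).
  { apply HT. rewrite dist_sym. lra. }
  rewrite <- Horbit in HTuN.
  pose proof (dist_triangle (T l) (u (S N)) l). lra.
Qed.

End MetricFacts.

Lemma Un_cv_const (c : R) : Un_cv (fun _ => c) c.
Proof.
  intros eps Heps. exists 0%nat. intros n _.
  unfold R_dist. rewrite Rminus_diag, Rabs_R0. exact Heps.
Qed.

Section ThreePointContraction.

Context {X : Type} {d : X -> X -> R} {T : X -> X} {alpha lambda : R}.
Hypothesis Hmet : is_metric d.
Hypothesis Hcontr : forall x y z : X, x <> y -> y <> z -> x <> z ->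
  d (T x) (T y) + d (T y) (T z) + d (T x) (T z)
    <= alpha * (d x y + d y z + d z x)
       + lambda * (d x (T x) + d y (T y) + d z (T z)).

Lemma fixed_points_at_most_two (Halpha : alpha < 1) (x y z : X) :
  T x = x -> T y = y -> T z = z -> x = y \/ y = z \/ x = z.
Proof.
  intros Hx Hy Hz.
  destruct (classic (x = y)) as [|Hxy]; [now left|].
  destruct (classic (y = z)) as [|Hyz]; [now right; left|].
  destruct (classic (x = z)) as [|Hxz]; [now right; right|].
  exfalso.
  pose proof (Hcontr x y z Hxy Hyz Hxz) as Hc.
  rewrite Hx, Hy, Hz, !(dist_self Hmet), (dist_sym Hmet z x) in Hc.
  assert (0 < (1 - alpha) * (d x y + d y z + d x z)).
  { apply Rmult_lt_0_compat; [lra|].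
    pose proof (dist_pos Hmet Hxy). pose proof (dist_nonneg Hmet y z).
    pose proof (dist_nonneg Hmet x z). lra. }
  lra.
Qed.

Hypotheses (Halpha0 : 0 <= alpha) (Halpha : alpha < 1/2) (Hlambda : 0 <= lambda).

Lemma dist_le_displacements (x y : X) : T x <> x ->
  d x y <= (4 + lambda) * (d (T x) x + d (T y) y + d (T (T x)) (T x)).
Proof.
  intros HTx.
  rewrite (dist_sym Hmet (T x)), (dist_sym Hmet (T y)), (dist_sym Hmet (T (T x))).
  set (a := d x (T x)); set (b := d y (T y)); set (c := d (T x) (T (T x))).
  assert (Ha : 0 <= a) by apply (dist_nonneg Hmet).
  assert (Hb : 0 <= b) by apply (dist_nonneg Hmet).
  assert (Hc : 0 <= c) by apply (dist_nonneg Hmet).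
  assert (Hbound : a <= (4 + lambda) * (a + b + c)).
  { assert (0 <= lambda * (a + b + c)) by (apply Rmult_le_pos; lra). lra. }
  destruct (classic (x = y)) as [<-|Hxy].
  { rewrite (dist_self Hmet). lra. }
  destruct (classic (y = T x)) as [->|HyTx]; [exact Hbound|].
  pose proof (Hcontr x y (T x) Hxy HyTx (not_eq_sym HTx)) as Hcontr_xy.
  rewrite (dist_sym Hmet (T x) x) in Hcontr_xy. fold a b c in Hcontr_xy.
  set (D := d x y) in *.
  assert (HD : 0 <= D) by apply (dist_nonneg Hmet).
  assert (Hvia_Ty : D <= a + d (T x) (T y) + b).
  { unfold a, b, D.
    pose proof (dist_triangle Hmet x (T x) y) as H1.
    pose proof (dist_triangle Hmet (T x) (T y) y) as H2.
    rewrite (dist_sym Hmet (T y) y) in H2. lra. }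
  assert (Hvia_TTx_Ty : D <= a + c + d (T y) (T (T x)) + b).
  { unfold a, b, c, D.
    pose proof (dist_triangle Hmet x (T x) y) as H1.
    pose proof (dist_triangle Hmet (T x) (T (T x)) y) as H2.
    pose proof (dist_triangle Hmet (T (T x)) (T y) y) as H3.
    rewrite (dist_sym Hmet (T y) y), (dist_sym Hmet (T (T x)) (T y)) in H3. lra. }
  assert (Hy_Tx : alpha * d y (T x) <= alpha * (D + a)).
  { apply Rmult_le_compat_l; [lra|]. unfold a, D.
    pose proof (dist_triangle Hmet y x (T x)) as H1.
    rewrite (dist_sym Hmet y x) in H1. lra. }
  (* Adding the two triangle bounds gives 2 (1 - alpha) D, and 2 (1 - alpha) > 1. *)
  assert (0 <= (1 - 2 * alpha) * D) by (apply Rmult_le_pos; lra).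
  assert (0 <= (1 - 2 * alpha) * a) by (apply Rmult_le_pos; lra).
  assert (0 <= lambda * c) by (apply Rmult_le_pos; lra).
  lra.
Qed.

Lemma orbit_mcauchy (x0 : X) :
  asymptotically_regular d T ->
  (forall n, T (Nat.iter n T x0) <> Nat.iter n T x0) ->
  mcauchy d (fun n => Nat.iter n T x0).
Proof.
  intros Hreg Hmove.
  set (e := fun n => d (Nat.iter (S n) T x0) (Nat.iter n T x0)).
  set (g := fun n => (4 + lambda) * (e n + e (S n))).
  assert (He : Un_cv e 0) by apply Hreg.
  assert (HeS : Un_cv (fun n => e (S n)) 0).
  { intros eps Heps. destruct (CV_shift' e 1 0 He eps Heps) as [N HN].
    exists N. intros n Hn. rewrite <- Nat.add_1_r. exact (HN n Hn). }
  apply mcauchy_of_dist_le_sum with g.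
  - replace 0 with ((4 + lambda) * (0 + 0)) by ring.
    apply CV_mult; [apply Un_cv_const|].
    now apply CV_plus.
  - intros m n.
    pose proof (dist_le_displacements (Nat.iter m T x0) (Nat.iter n T x0) (Hmove m)).
    assert (0 <= (4 + lambda) * e (S n))
      by (apply Rmult_le_pos; [lra|apply (dist_nonneg Hmet)]).
    unfold g, e in *; simpl in *. lra.
Qed.

End ThreePointContraction.

Theorem corollary4p8 (X : Type) (d : X -> X -> R) (T : X -> X)
  (alpha lambda : R)
  (Hmet : is_metric d) (Hcomp : mcomplete d)
  (H3 : exists a b c : X, a <> b /\ b <> c /\ a <> c)
  (Hcont : mcontinuous d T) (Hreg : asymptotically_regular d T)
  (Halpha : 0 <= alpha /\ alpha < 1/2) (Hlambda : 0 <= lambda)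
  (Hcontr : forall x y z : X, x <> y -> y <> z -> x <> z ->
     d (T x) (T y) + d (T y) (T z) + d (T x) (T z)
       <= alpha * (d x y + d y z + d z x)
          + lambda * (d x (T x) + d y (T y) + d z (T z))) :
  (exists x : X, T x = x) /\
  (forall x y z : X, T x = x -> T y = y -> T z = z -> x = y \/ y = z \/ x = z).
Proof.
  destruct Halpha as [Halpha0 Halpha].
  split; [|apply (fixed_points_at_most_two Hmet Hcontr); lra].
  destruct H3 as [x0 _].
  destruct (classic (exists n, T (Nat.iter n T x0) = Nat.iter n T x0))
    as [[n Hfix]|Hmove].
  - now exists (Nat.iter n T x0).
  - assert (Hcauchy : mcauchy d (fun n => Nat.iter n T x0)).
    { apply (orbit_mcauchy Hmet Hcontr Halpha0 Halpha Hlambda x0 Hreg).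
      intros n Hfix. apply Hmove. now exists n. }
    destruct (Hcomp _ Hcauchy) as [l Hl].
    exists l. now apply (orbit_limit_fixed Hmet T (fun n => Nat.iter n T x0)).
Qed.
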